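(* Let $\mathbb{D}$ be a division ring with $\operatorname{char}\mathbb{D}\ne 2,3$, let $n\ge 1$, and let $C\in M_n(\mathbb{D})$. Let $\mathbb{D}^n$ denote the space of column vectors $x=(x_1,\dots,x_n)^T$ with entries in $\mathbb{D}$. If for all $a,b\in\mathbb{D}^n$, $a^Tb=0$ implies $a^TCb=0$, then $C=\lambda I$ for some $\lambda\in\mathbb{D}$. *)

From HB Require Import structures.
From mathcomp Require Import all_boot all_order all_algebra.
Set Implicit Arguments. Unset Strict Implicit. Unset Printing Implicit Defensive.
Import GRing.Theory.
Local Open Scope ring_scope.

Definition is_division_ring (D : unitRingType) : Prop :=
  forall x : D, x != 0 -> x \is a GRing.unit.

From mathcomp Require Import all_boot all_order all_algebra.
Set Implicit Arguments. Unset Strict Implicit. Unset Printing Implicit Defensive.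
Import GRing.Theory.
Local Open Scope ring_scope.

(* Testing the hypothesis on standard basis vectors suffices: [e_i, e_j]
   with [i != j] kills the off-diagonal entries, and [e_i + e_j, e_i - e_j]
   shows that [C i i = C j j].  The argument works over any ring. *)

Local Notation e i := (delta_mx i (0 : 'I_1)).

Lemma trmx_delta_mulmx_delta (R : pzSemiRingType) m n (A : 'M[R]_(m, n)) i j :
  (e i)^T *m A *m e j = (A i j)%:M.
Proof.
by apply/matrixP => x y; rewrite !ord1 trmx_delta -rowE -colE !mxE eqxx mulr1n.
Qed.

Lemma trmx_deltaDB_mulmx_deltaDB (R : pzRingType) n (A : 'M[R]_n) i j :
  (e i + e j)^T *m A *m (e i - e j) = (A i i - A i j + (A j i - A j j))%:M.
Proof.
rewrite linearD /= !mulmxDl !mulmxBr !trmx_delta_mulmx_delta.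
by rewrite raddfD !raddfB.
Qed.

Lemma scalar_mx1_eq0 (R : pzSemiRingType) (x : R) : (x%:M : 'M_1) = 0 -> x = 0.
Proof. by move/(congr1 (fun M : 'M_1 => M 0 0)); rewrite !mxE eqxx mulr1n. Qed.

Section OrthogonalityPreserving.

Variables (R : pzRingType) (n : nat) (C : 'M[R]_n).
Hypothesis orthoC : forall a b : 'cV[R]_n, a^T *m b = 0 -> a^T *m C *m b = 0.

Lemma orthogonality_preserving_offdiag i j : i != j -> C i j = 0.
Proof.
move=> neq_ij; apply: scalar_mx1_eq0; rewrite -trmx_delta_mulmx_delta orthoC //.
have := trmx_delta_mulmx_delta (1%:M : 'M[R]_n) i j; rewrite mulmx1 => ->.
by rewrite mxE (negbTE neq_ij) raddf0.
Qed.

Lemma orthogonality_preserving_diag i j : C i i = C j j.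
Proof.
have [-> // | neq_ij] := eqVneq i j.
have neq_ji : j != i by rewrite eq_sym.
have orth_ij : (e i + e j)^T *m (e i - e j) = 0 :> 'M[R]_1.
  have := trmx_deltaDB_mulmx_deltaDB (1%:M : 'M[R]_n) i j; rewrite mulmx1 => ->.
  by rewrite !mxE !eqxx (negbTE neq_ij) (negbTE neq_ji) subr0 sub0r subrr raddf0.
have := orthoC orth_ij; rewrite trmx_deltaDB_mulmx_deltaDB.
rewrite (orthogonality_preserving_offdiag neq_ij) (orthogonality_preserving_offdiag neq_ji).
by rewrite subr0 sub0r => /scalar_mx1_eq0/eqP; rewrite subr_eq0 => /eqP.
Qed.

Lemma orthogonality_preserving_scalar (i0 : 'I_n) : C = (C i0 i0)%:M.
Proof.
apply/matrixP => i j; rewrite mxE.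
have [<- | neq_ij] := eqVneq i j; last by rewrite orthogonality_preserving_offdiag.
by rewrite mulr1n (orthogonality_preserving_diag i i0).
Qed.

End OrthogonalityPreserving.

Theorem lemma3p2 (D : unitRingType) (hD : is_division_ring D)
  (h2 : (2%:R : D) != 0) (h3 : (3%:R : D) != 0)
  (n : nat) (hn : (0 < n)%N) (C : 'M[D]_n) :
  (forall a b : 'cV[D]_n, a^T *m b = 0 -> a^T *m C *m b = 0) ->
  exists lambda : D, C = lambda%:M.
Proof.
move=> orthoC; exists (C (Ordinal hn) (Ordinal hn)).
exact: orthogonality_preserving_scalar.
Qed.
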